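(* Assume Assumption (S). Let $U$ be a sufficiently smooth solution of $U_t+\beta U_x=0$ on $\Omega$ with periodic boundary conditions, $U^n=U(\cdot,n\tau)$, and define reference functions $U^{n,0}=U^n$, $U^{n,\ell+1}=\sum_{0\le\kappa\le\ell}(c_{\ell\kappa}U^{n,\kappa}-\tau d_{\ell\kappa}\beta U^{n,\kappa}_x)$ for $\ell=0,\dots,s-2$, and $U^{n,s}=U^{n+1}$. Define $\rho^{n,\ell+1}=0$ for $\ell<s-1$ and $\rho^{n,s}=\frac1\tau\big(U^{n+1}-\sum_{0\le\kappa\le s-1}(c_{s-1,\kappa}U^{n,\kappa}-\tau d_{s-1,\kappa}\beta U^{n,\kappa}_x)\big)$. Then for all $\omega\in\mathbb V^k$ and $\ell=0,\dots,s-1$, $$(U^{n,\ell+1},M^*\omega)=\sum_{0\le\kappa\le\ell}\big(c_{\ell\kappa}(U^{n,\kappa},M^*\omega)+\tau d_{\ell\kappa}\mathcal H^*(U^{n,\kappa},\omega)\big)+\tau(\rho^{n,\ell+1},M^*\omega).$$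
   Context: Let $\Omega=[a,b]$ be partitioned into finitely many cells $I_i=[x_{i-\frac12},x_{i+\frac12}]$ with sizes $h_i$; indices periodic. $(\cdot,\cdot)$: $L^2(\Omega)$ inner product; $(\cdot,\cdot)_{I_i}$: $L^2(I_i)$ inner product. $\mathbb V^k=\{v\in L^2(\Omega): v|_{I_i}\in\mathbb P^k(I_i)\ \forall i\}$. Each $I_i$ has subdivision points $x_{i-\frac12}=x_{i,0}<x_{i,1}<\dots<x_{i,k}<x_{i,k+1}=x_{i+\frac12}$, control volumes $I_{i,j}=[x_{i,j},x_{i,j+1}]$; $\mathbb V^{k,*}$ = functions constant on each $I_{i,j}$. Quadrature on $I_i$: $Q_i^k(v)=\sum_{j=0}^{k+1}A_{i,j}v(x_{i,j})$ (applied to restrictions to $I_i$, endpoint values from inside), error $R_i^k(v)=\int_{I_i}v\,dx-Q_i^k(v)$, exact on $\mathbb P^{k-1}(I_i)$. $M^*:\mathbb V^k\to\mathbb V^{k,*}$: for $v=\omega|_{I_i}$, $(M^*\omega)|_{I_{i,0}}=v(x_{i-\frac12})+A_{i,0}v'(x_{i-\frac12})$, $(M^*\omega)|_{I_{i,j}}-(M^*\omega)|_{I_{i,j-1}}=A_{i,j}v'(x_{i,j})$, $j=1,\dots,k$. $L_{i,\ell}$: shifted Legendre polynomial of degree $\ell$ on $I_i$, $L_{i,\ell}(x_{i+\frac12})=1$, $(L_{i,\ell},L_{i,m})_{I_i}=\delta_{\ell m}h_i/(2\ell+1)$. Assumption (S): $k\ge1$ and for every $i$, $R_i^k$ vanishes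 on $\mathbb P^{2k-1}(I_i)$ and $\frac{h_i}{2k-1}-Q_i^k(L_{i,k+1}L_{i,k-1})>0$. Jumps $[\![v]\!]_{i+\frac12}=v(x_{i+\frac12}^+)-v(x_{i+\frac12}^-)$. For $\omega\in\mathbb V^k$ and $v$ piecewise smooth (in particular continuous $v$): $\mathcal H^*(v,\omega)=\beta\big(\sum_iQ_i^k(v\omega_x)+\sum_iv(x_{i+\frac12}^-)[\![\omega]\!]_{i+\frac12}-\sum_iA_{i,0}\omega_x(x_{i-\frac12}^+)[\![v]\!]_{i-\frac12}\big)$, $\beta>0$ constant. $c_{\ell\kappa},d_{\ell\kappa}$ ($0\le\kappa\le\ell\le s-1$, $\sum_\kappa c_{\ell\kappa}=1$) are explicit $s$-stage Runge–Kutta coefficients, $\tau>0$ the time step. *)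

From Stdlib Require Import Reals Lra Lia Arith List.
From Coquelicot Require Import Coquelicot.
Import ListNotations.
Open Scope R_scope.

Definition sumR (n : nat) (f : nat -> R) : R :=
  fold_right Rplus 0 (map f (seq 0 n)).

Definition binomR (n m : nat) : R :=
  INR (fact n) / (INR (fact m) * INR (fact (n - m))).

Definition is_poly (p : R -> R) (d : nat) : Prop :=
  exists cf : nat -> R, forall x, p x = sumR (S d) (fun m => cf m * x ^ m).

(* Mesh: N cells, I_i = [node i, node (i+1)], i = 0..N-1;
   x_{i-1/2} = node i; subdivision points x_{i,j} = sub i j, j=0..k+1. *)
Definition mesh_ok (a b : R) (N k : nat) (node : nat -> R) (sub : nat -> nat -> R) : Prop :=
  (0 < N)%nat /\ node O = a /\ node N = b /\
  forall i, (i < N)%nat ->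
    sub i O = node i /\ sub i (S k) = node (S i) /\
    forall j, (j <= k)%nat -> sub i j < sub i (S j).

Definition hcell (node : nat -> R) (i : nat) : R := node (S i) - node i.

Definition nextc (N i : nat) : nat := Nat.modulo (S i) N.
Definition prevc (N i : nat) : nat := Nat.modulo (i + N - 1) N.

Definition Quad (k : nat) (sub A : nat -> nat -> R) (i : nat) (v : R -> R) : R :=
  sumR (S (S k)) (fun j => A i j * v (sub i j)).

(* shifted Legendre polynomial L_{i,l} on I_i, L_{i,l}(x_{i+1/2}) = 1,
   (L_{i,l},L_{i,m})_{I_i} = delta h_i/(2l+1)  (explicit classical formula) *)
Definition Lleg (node : nat -> R) (i l : nat) (x : R) : R :=
  sumR (S l) (fun m => binomR l m * binomR (l + m) m *
                      ((x - node (S i)) / hcell node i) ^ m).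

Definition AssumptionS (N k : nat) (node : nat -> R) (sub A : nat -> nat -> R) : Prop :=
  (1 <= k)%nat /\
  forall i, (i < N)%nat ->
    (forall p, is_poly p (2 * k - 1) ->
       RInt p (node i) (node (S i)) - Quad k sub A i p = 0) /\
    hcell node i / INR (2 * k - 1)
      - Quad k sub A i (fun x => Lleg node i (k + 1) x * Lleg node i (k - 1) x) > 0.

(* M^* omega : value on control volume I_{i,j}, j = 0..k; w = omega|_{I_i} *)
Fixpoint Mstar (node : nat -> R) (sub A : nat -> nat -> R) (w : R -> R) (i j : nat) : R :=
  match j with
  | O => w (node i) + A i O * Derive w (node i)
  | S j' => Mstar node sub A w i j' + A i j * Derive w (sub i j)
  end.

(* L^2(Omega) inner product (v, W) of a function v with W in V^{k,*},
   W given by its constant values W i j on the control volumes I_{i,j}. *)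
Definition ipstar (N k : nat) (sub : nat -> nat -> R) (v : R -> R)
  (W : nat -> nat -> R) : R :=
  sumR N (fun i => sumR (S k) (fun j => W i j * RInt v (sub i j) (sub i (S j)))).

(* jump [[f]]_{i+1/2} of a piecewise function given cellwise by f i *)
Definition jump (N : nat) (node : nat -> R) (f : nat -> R -> R) (i : nat) : R :=
  f (nextc N i) (node (nextc N i)) - f i (node (S i)).

(* H^*(v, omega), v and omega given cellwise (v i = v|_{I_i}, omega i = omega|_{I_i}) *)
Definition Hstar (N k : nat) (node : nat -> R) (sub A : nat -> nat -> R) (beta : R)
  (v omega : nat -> R -> R) : R :=
  beta * ( sumR N (fun i => Quad k sub A i (fun x => v i x * Derive (omega i) x))
         + sumR N (fun i => v i (node (S i)) * jump N node omega i)
         - sumR N (fun i => A i O * Derive (omega i) (node i)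
                             * jump N node v (prevc N i)) ).

Definition rk_step (c d : nat -> nat -> R) (tau beta : R) (F : nat -> R -> R) (l : nat)
  : R -> R :=
  fun x => sumR (S l) (fun kap => c l kap * F kap x - tau * d l kap * beta * Derive (F kap) x).

(* stages m kap = U^{n,kap} for kap <= m, built from U0 = U^n *)
Fixpoint stages (c d : nat -> nat -> R) (tau beta : R) (U0 : R -> R) (m : nat)
  : nat -> R -> R :=
  match m with
  | O => fun _ => U0
  | S m' => let F := stages c d tau beta U0 m' in
            fun kap => if Nat.leb kap m' then F kap else rk_step c d tau beta F m'
  end.

Definition Uref (s : nat) (c d : nat -> nat -> R) (tau beta : R) (U0 U1 : R -> R)
  (kap : nat) : R -> R :=
  if Nat.eqb kap s then U1 else stages c d tau beta U0 kap kap.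

Definition rho (s : nat) (c d : nat -> nat -> R) (tau beta : R) (U0 U1 : R -> R)
  (l1 : nat) : R -> R :=
  if Nat.eqb l1 s then
    fun x => / tau * (U1 x - rk_step c d tau beta (Uref s c d tau beta U0 U1) (s - 1) x)
  else fun _ => 0.

From Stdlib Require Import Reals Lra Lia List.
From Coquelicot Require Import Coquelicot.
Open Scope R_scope.

(* On a cell I_i the values of M^*ω are partial sums of the quadrature weights times ω_x, so
   summation by parts, together with exactness of Q_i^k on ω_x ∈ P^{k-1}, gives
   Σ_j (M^*ω)|_{I_{i,j}} ∫_{I_{i,j}} v_x = (ωv)(x_{i+1/2}^-) - (ωv)(x_{i-1/2}^+) - Q_i^k(v ω_x).
   For v smooth and periodic the jumps of v vanish and the boundary terms, summed over the
   periodic mesh, are exactly the jump terms of H^*; hence H^*(v, ω) = -β (v_x, M^*ω).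
   Pairing the defining relation U^{n,ℓ+1} = Σ_κ (c_{ℓκ} U^{n,κ} - τ d_{ℓκ} β U^{n,κ}_x) + τ ρ^{n,ℓ+1}
   with M^*ω then gives the claim. *)

Lemma sumR_S n f : sumR (S n) f = sumR n f + f n.
Proof.
  unfold sumR. rewrite seq_S, map_app, fold_right_app. simpl.
  induction (map f (seq 0 n)); simpl; lra.
Qed.

Lemma sumR_shift n f : sumR (S n) f = f 0%nat + sumR n (fun i => f (S i)).
Proof. unfold sumR. simpl. rewrite <- seq_shift, map_map. reflexivity. Qed.

Lemma sumR_ext n f g : (forall i, (i < n)%nat -> f i = g i) -> sumR n f = sumR n g.
Proof.
  induction n as [|n IH]; intros E; [reflexivity|].
  rewrite !sumR_S, IH by (intros; apply E; lia). rewrite E by lia. reflexivity.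
Qed.

Lemma sumR_plus n f g : sumR n (fun i => f i + g i) = sumR n f + sumR n g.
Proof. induction n as [|n IH]; [cbn; lra|]. rewrite !sumR_S, IH. lra. Qed.

Lemma sumR_minus n f g : sumR n (fun i => f i - g i) = sumR n f - sumR n g.
Proof. induction n as [|n IH]; [cbn; lra|]. rewrite !sumR_S, IH. lra. Qed.

Lemma sumR_scal n a f : sumR n (fun i => a * f i) = a * sumR n f.
Proof. induction n as [|n IH]; [cbn; lra|]. rewrite !sumR_S, IH. lra. Qed.

Lemma sumR_pad n p g :
  sumR (n + p) (fun m => if Nat.ltb m n then g m else 0) = sumR n g.
Proof.
  induction p as [|p IH].
  - rewrite Nat.add_0_r. apply sumR_ext. intros i Hi.
    destruct (Nat.ltb_spec i n); [reflexivity | lia].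
  - rewrite Nat.add_succ_r, sumR_S, IH. destruct (Nat.ltb_spec (n + p) n); [lia | lra].
Qed.

Lemma sumR_nextc N f : (0 < N)%nat -> sumR N (fun i => f (nextc N i)) = sumR N f.
Proof.
  intros HN. destruct N as [|M]; [lia|].
  rewrite sumR_S, sumR_shift.
  unfold nextc at 2. rewrite Nat.Div0.mod_same by lia.
  rewrite (sumR_ext M _ (fun i => f (S i))); [lra|].
  intros i Hi. unfold nextc. rewrite Nat.mod_small by lia. reflexivity.
Qed.

Lemma is_derive_polynomial n cf x :
  is_derive (fun y => sumR n (fun m => cf m * y ^ m)) x
            (sumR n (fun m => cf m * (INR m * x ^ pred m))).
Proof.
  induction n as [|n IH].
  - apply (is_derive_const (V := R_NormedModule) 0).
  - apply is_derive_ext with (f := fun y => sumR n (fun m => cf m * y ^ m) + cf n * y ^ n).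
    { intros y. rewrite sumR_S. reflexivity. }
    rewrite sumR_S. apply (is_derive_plus (K := R_AbsRing) (V := R_NormedModule)); [exact IH|].
    apply is_derive_scal. rewrite <- (Rmult_1_r (INR n)).
    exact (is_derive_pow (fun y => y) n x 1 (is_derive_id (K := R_AbsRing) x)).
Qed.

Lemma is_derive_poly_coeffs p d cf x : (forall y, p y = sumR (S d) (fun m => cf m * y ^ m)) ->
  is_derive p x (sumR (S d) (fun m => cf m * (INR m * x ^ pred m))).
Proof.
  intros Hp. eapply is_derive_ext; [|apply is_derive_polynomial].
  intros y. symmetry. apply Hp.
Qed.

Lemma is_poly_ex_derive p d x : is_poly p d -> ex_derive p x.
Proof. intros [cf Hp]. eexists. eapply is_derive_poly_coeffs, Hp. Qed.

Lemma is_poly_continuous p d x : is_poly p d -> continuous p x.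
Proof.
  intros Hp. apply (ex_derive_continuous (K := R_AbsRing) (V := R_NormedModule)).
  eapply is_poly_ex_derive, Hp.
Qed.

Lemma is_poly_Derive p d : is_poly p (S d) -> is_poly (Derive p) d.
Proof.
  intros [cf Hp]. exists (fun m => cf (S m) * INR (S m)). intros x.
  rewrite (is_derive_unique _ _ _ (is_derive_poly_coeffs p (S d) cf x Hp)), sumR_shift.
  simpl INR at 1. rewrite Rmult_0_l, Rmult_0_r, Rplus_0_l.
  apply sumR_ext. intros m _. simpl pred. ring.
Qed.

Lemma is_poly_le p d e : (d <= e)%nat -> is_poly p d -> is_poly p e.
Proof.
  intros Hde [cf Hp]. exists (fun m => if Nat.ltb m (S d) then cf m else 0). intros x.
  rewrite Hp, <- (sumR_pad (S d) (e - d)), (Nat.add_comm (S d)), Nat.add_succ_r, Nat.sub_add by lia.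
  apply sumR_ext. intros m _. destruct (Nat.ltb m (S d)); ring.
Qed.

Definition smooth (f : R -> R) : Prop := forall m x, ex_derive (Derive_n f m) x.

Definition periodic (p : R) (f : R -> R) : Prop := forall x, f (x + p) = f x.

Lemma smooth_ext f g : (forall x, f x = g x) -> smooth f -> smooth g.
Proof.
  intros E Hf m x. eapply ex_derive_ext; [|apply (Hf m x)].
  intros t. apply Derive_n_ext, E.
Qed.

Lemma smooth_ex_derive f x : smooth f -> ex_derive f x.
Proof. intros Hf. exact (Hf O x). Qed.

Lemma smooth_continuous f x : smooth f -> continuous f x.
Proof.
  intros Hf. apply (ex_derive_continuous (K := R_AbsRing) (V := R_NormedModule)).
  exact (Hf O x).
Qed.

Lemma smooth_Derive f : smooth f -> smooth (Derive f).
Proof.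
  intros Hf m x. eapply ex_derive_ext; [|apply (Hf (S m) x)].
  intros t. change (Derive f) with (Derive_n f 1). rewrite Derive_n_comp, Nat.add_1_r. reflexivity.
Qed.

Lemma smooth_continuous_Derive f x : smooth f -> continuous (Derive f) x.
Proof. intros Hf. apply smooth_continuous, smooth_Derive, Hf. Qed.

Lemma smooth_const c : smooth (fun _ => c).
Proof.
  intros [|m] x.
  - apply ex_derive_const.
  - apply ex_derive_ext with (f := fun _ => 0); [|apply ex_derive_const].
    intros t. symmetry. apply Derive_n_const.
Qed.

Lemma smooth_plus f g : smooth f -> smooth g -> smooth (fun x => f x + g x).
Proof.
  intros Hf Hg m x. eapply ex_derive_ext.
  { intros t. symmetry. apply Derive_n_plus; apply filter_forall;
      intros y [|j] _; [exact I|apply Hf| exact I|apply Hg]. }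
  apply (ex_derive_plus (K := R_AbsRing) (V := R_NormedModule)); auto.
Qed.

Lemma smooth_scal a f : smooth f -> smooth (fun x => a * f x).
Proof.
  intros Hf m x. eapply ex_derive_ext.
  { intros t. symmetry. apply Derive_n_scal_l. }
  apply ex_derive_scal, Hf.
Qed.

Lemma smooth_sumR n (h : nat -> R -> R) :
  (forall i, (i < n)%nat -> smooth (h i)) -> smooth (fun x => sumR n (fun i => h i x)).
Proof.
  induction n as [|n IH]; intros Hh.
  - apply (smooth_const 0).
  - eapply smooth_ext; [intros x; rewrite <- sumR_S; reflexivity|].
    apply smooth_plus; [apply IH; intros; apply Hh; lia | apply Hh; lia].
Qed.

Lemma periodic_Derive p f : (forall x, ex_derive f x) -> periodic p f -> periodic p (Derive f).
Proof.
  intros Hf Pf x.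
  rewrite <- (Derive_ext _ _ x Pf), (Derive_comp f (fun y => y + p)) by first [apply Hf | auto_derive; auto].
  replace (Derive (fun y => y + p) x) with 1; [ring|].
  symmetry. apply is_derive_unique. auto_derive; auto.
Qed.

Section RungeKuttaStages.
Variables (c d : nat -> nat -> R) (tau beta : R).

Lemma smooth_rk_step F l :
  (forall kap, (kap <= l)%nat -> smooth (F kap)) -> smooth (rk_step c d tau beta F l).
Proof.
  intros HF. apply (smooth_sumR (S l) (fun kap x => c l kap * F kap x - tau * d l kap * beta * Derive (F kap) x)).
  intros kap Hkap.
  apply (smooth_ext (fun x => c l kap * F kap x + - (tau * d l kap * beta) * Derive (F kap) x)).
  - intros x. ring.
  - apply smooth_plus; apply smooth_scal; [|apply smooth_Derive]; apply HF; lia.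
Qed.

Lemma periodic_rk_step p F l :
  (forall kap, (kap <= l)%nat -> (forall x, ex_derive (F kap) x) /\ periodic p (F kap)) ->
  periodic p (rk_step c d tau beta F l).
Proof.
  intros HF x. unfold rk_step. apply sumR_ext. intros kap Hkap.
  destruct (HF kap ltac:(lia)) as [Dk Pk].
  rewrite Pk, (periodic_Derive p _ Dk Pk). reflexivity.
Qed.

Lemma stages_diag U0 m kap : (kap <= m)%nat ->
  stages c d tau beta U0 m kap = stages c d tau beta U0 kap kap.
Proof.
  induction m as [|m IH]; intros Hkap.
  - replace kap with O by lia. reflexivity.
  - destruct (Nat.eq_dec kap (S m)) as [->|Hne]; [reflexivity|].
    cbn [stages]. destruct (Nat.leb_spec kap m); [apply IH | ]; lia.
Qed.

Lemma stages_invariant (P : (R -> R) -> Prop) U0 :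
  P U0 ->
  (forall F l, (forall kap, (kap <= l)%nat -> P (F kap)) -> P (rk_step c d tau beta F l)) ->
  forall m kap, (kap <= m)%nat -> P (stages c d tau beta U0 m kap).
Proof.
  intros H0 Hstep. induction m as [|m IH]; intros kap Hkap; [exact H0|].
  cbn [stages]. destruct (Nat.leb_spec kap m).
  - apply IH. lia.
  - apply Hstep. intros. apply IH. lia.
Qed.

Variables (s : nat) (U0 U1 : R -> R).

Lemma Uref_invariant (P : (R -> R) -> Prop) :
  P U0 -> P U1 ->
  (forall F l, (forall kap, (kap <= l)%nat -> P (F kap)) -> P (rk_step c d tau beta F l)) ->
  forall kap, P (Uref s c d tau beta U0 U1 kap).
Proof.
  intros H0 H1 Hstep kap. unfold Uref. destruct (Nat.eqb kap s); [exact H1|].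
  apply stages_invariant; auto.
Qed.

Lemma Uref_smooth_periodic p :
  smooth U0 -> periodic p U0 -> smooth U1 -> periodic p U1 ->
  forall kap, smooth (Uref s c d tau beta U0 U1 kap) /\ periodic p (Uref s c d tau beta U0 U1 kap).
Proof.
  intros S0 P0 S1 P1. apply (Uref_invariant (fun f => smooth f /\ periodic p f)); auto.
  intros F l HF. split.
  - apply smooth_rk_step. intros kap Hkap. apply HF, Hkap.
  - apply periodic_rk_step. intros kap Hkap. destruct (HF kap Hkap) as [Sk Pk].
    split; [intros; apply smooth_ex_derive|]; assumption.
Qed.

Lemma rho_smooth l1 : smooth U0 -> smooth U1 -> smooth (rho s c d tau beta U0 U1 l1).
Proof.
  intros S0 S1. unfold rho. destruct (Nat.eqb l1 s); [|apply smooth_const].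
  apply smooth_scal.
  apply (smooth_ext (fun x => U1 x + -1 * rk_step c d tau beta (Uref s c d tau beta U0 U1) (s - 1) x));
    [intros; ring|].
  apply smooth_plus, smooth_scal, smooth_rk_step; [exact S1|].
  intros kap _. apply (Uref_invariant smooth); auto using smooth_rk_step.
Qed.

Lemma Uref_succ l : (l < s)%nat -> tau <> 0 -> forall x,
  Uref s c d tau beta U0 U1 (S l) x
  = rk_step c d tau beta (Uref s c d tau beta U0 U1) l x + tau * rho s c d tau beta U0 U1 (S l) x.
Proof.
  intros Hl Htau x. unfold rho. destruct (Nat.eqb_spec (S l) s) as [E|E].
  - replace (s - 1)%nat with l by lia.
    unfold Uref at 1. rewrite E, Nat.eqb_refl. field. exact Htau.
  - unfold Uref at 1. apply Nat.eqb_neq in E. rewrite E. cbn [stages].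
    replace (S l <=? l)%nat with false by (symmetry; apply Nat.leb_gt; lia).
    rewrite Rmult_0_r, Rplus_0_r. unfold rk_step. apply sumR_ext. intros kap Hkap.
    unfold Uref. destruct (Nat.eqb_spec kap s); [lia|].
    rewrite stages_diag by lia. reflexivity.
Qed.

End RungeKuttaStages.

Lemma continuous_sumR n (h : nat -> R -> R) x :
  (forall i, (i < n)%nat -> continuous (h i) x) -> continuous (fun y => sumR n (fun i => h i y)) x.
Proof.
  induction n as [|n IH]; intros Hh.
  - apply (continuous_const (U := R_UniformSpace) 0).
  - eapply continuous_ext; [intros y; rewrite <- sumR_S; reflexivity|].
    apply (continuous_plus (V := R_NormedModule)); [apply IH; intros; apply Hh | apply Hh]; lia.
Qed.

Section PairingWithPiecewiseConstants.
Variables (N k : nat) (sub : nat -> nat -> R) (W : nat -> nat -> R).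

Lemma ipstar_ext f g : (forall x, f x = g x) -> ipstar N k sub f W = ipstar N k sub g W.
Proof.
  intros E. unfold ipstar. apply sumR_ext. intros i _. apply sumR_ext. intros j _.
  f_equal. apply RInt_ext. auto.
Qed.

Lemma ipstar_plus f g : (forall x, continuous f x) -> (forall x, continuous g x) ->
  ipstar N k sub (fun x => f x + g x) W = ipstar N k sub f W + ipstar N k sub g W.
Proof.
  intros Hf Hg. unfold ipstar. rewrite <- sumR_plus. apply sumR_ext. intros i _.
  rewrite <- sumR_plus. apply sumR_ext. intros j _.
  rewrite (RInt_plus (V := R_CompleteNormedModule) f g); [apply Rmult_plus_distr_l | |];
    apply (ex_RInt_continuous (V := R_CompleteNormedModule)); auto.
Qed.

Lemma ipstar_scal a f : (forall x, continuous f x) ->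
  ipstar N k sub (fun x => a * f x) W = a * ipstar N k sub f W.
Proof.
  intros Hf. unfold ipstar. rewrite <- sumR_scal. apply sumR_ext. intros i _.
  rewrite <- sumR_scal. apply sumR_ext. intros j _.
  rewrite (RInt_scal (V := R_CompleteNormedModule) f); [change (scal a ?I) with (a * I); ring |].
  apply (ex_RInt_continuous (V := R_CompleteNormedModule)); auto.
Qed.

Lemma ipstar_sumR n (h : nat -> R -> R) :
  (forall i, (i < n)%nat -> forall x, continuous (h i) x) ->
  ipstar N k sub (fun x => sumR n (fun i => h i x)) W = sumR n (fun i => ipstar N k sub (h i) W).
Proof.
  induction n as [|n IH]; intros Hh.
  - rewrite (ipstar_ext _ (fun x => 0 * 0)) by (intros; cbn; ring).
    rewrite ipstar_scal by (intros; apply continuous_const). cbn. ring.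
  - rewrite (ipstar_ext _ (fun x => sumR n (fun i => h i x) + h n x)) by (intros; apply sumR_S).
    rewrite ipstar_plus, IH, sumR_S; auto.
    intros x. apply continuous_sumR. intros. apply Hh. lia.
Qed.

Lemma ipstar_rk_step c d tau beta F l :
  (forall kap, (kap <= l)%nat -> forall x, continuous (F kap) x /\ continuous (Derive (F kap)) x) ->
  ipstar N k sub (rk_step c d tau beta F l) W
  = sumR (S l) (fun kap => c l kap * ipstar N k sub (F kap) W
                           - tau * d l kap * beta * ipstar N k sub (Derive (F kap)) W).
Proof.
  intros HF. unfold rk_step. rewrite ipstar_sumR.
  - apply sumR_ext. intros kap Hkap.
    rewrite (ipstar_ext _ (fun x => c l kap * F kap x + - (tau * d l kap * beta) * Derive (F kap) x))
      by (intros; ring).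
    rewrite ipstar_plus, !ipstar_scal; try ring; intros x;
      try apply (continuous_mult (K := R_AbsRing) (fun _ => _)); try apply continuous_const;
      apply HF; lia.
  - intros kap Hkap x. destruct (HF kap ltac:(lia) x) as [C0 C1].
    apply (continuous_plus (V := R_NormedModule)); [|apply (continuous_opp (V := R_NormedModule))];
      apply (continuous_mult (K := R_AbsRing) (fun _ => _)); auto; apply continuous_const.
Qed.

End PairingWithPiecewiseConstants.

Section OneCell.
Variables (node : nat -> R) (sub A : nat -> nat -> R) (k i : nat) (w v : R -> R).
Hypothesis sub_first : sub i O = node i.

Lemma Mstar_sumR m :
  Mstar node sub A w i m = w (node i) + sumR (S m) (fun j => A i j * Derive w (sub i j)).
Proof.
  induction m as [|m IH]; cbn [Mstar].
  - rewrite sumR_S, sub_first. cbn. ring.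
  - rewrite IH, (sumR_S (S m)). ring.
Qed.

Lemma Mstar_summation_by_parts m :
  sumR (S m) (fun j => Mstar node sub A w i j * (v (sub i (S j)) - v (sub i j)))
  = Mstar node sub A w i m * v (sub i (S m)) - w (node i) * v (node i)
    - sumR (S m) (fun j => A i j * Derive w (sub i j) * v (sub i j)).
Proof.
  induction m as [|m IH].
  - rewrite !sumR_S. cbn [Mstar]. rewrite sub_first. cbn. ring.
  - rewrite (sumR_S (S m)), IH, (sumR_S (S m)). cbn [Mstar]. ring.
Qed.

Hypothesis sub_last : sub i (S k) = node (S i).

Lemma Mstar_pairing_Derive :
  (forall x, ex_derive v x) -> (forall x, continuous (Derive v) x) ->
  Quad k sub A i (Derive w) = w (node (S i)) - w (node i) ->
  sumR (S k) (fun j => Mstar node sub A w i j * RInt (Derive v) (sub i j) (sub i (S j)))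
  = w (node (S i)) * v (node (S i)) - w (node i) * v (node i)
    - Quad k sub A i (fun x => v x * Derive w x).
Proof.
  intros Dv Cv Hquad.
  rewrite (sumR_ext _ _ (fun j => Mstar node sub A w i j * (v (sub i (S j)) - v (sub i j))))
    by (intros; rewrite RInt_Derive; auto).
  rewrite Mstar_summation_by_parts, Mstar_sumR.
  unfold Quad in *. rewrite sumR_S, sub_last in Hquad.
  rewrite (sumR_S (S k) (fun j => A i j * (v (sub i j) * Derive w (sub i j)))), sub_last.
  replace (sumR (S k) (fun j => A i j * Derive w (sub i j)))
    with (w (node (S i)) - w (node i) - A i (S k) * Derive w (node (S i))) by lra.
  rewrite (sumR_ext _ (fun j => A i j * (v (sub i j) * Derive w (sub i j)))
                      (fun j => A i j * Derive w (sub i j) * v (sub i j))) by (intros; ring).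
  ring.
Qed.

End OneCell.

Lemma Quad_Derive_poly N k node sub A i w :
  AssumptionS N k node sub A -> (i < N)%nat -> is_poly w k ->
  Quad k sub A i (Derive w) = w (node (S i)) - w (node i).
Proof.
  intros [Hk HS] Hi Hw.
  assert (Dw : is_poly (Derive w) (k - 1)).
  { apply is_poly_Derive. replace (S (k - 1)) with k by lia. exact Hw. }
  rewrite <- (RInt_Derive w); [| intros; eapply is_poly_ex_derive, Hw
                               | intros; eapply is_poly_continuous, Dw].
  symmetry. apply Rminus_diag_uniq, (proj1 (HS i Hi)).
  apply (is_poly_le _ (k - 1)); [lia | exact Dw].
Qed.

Lemma value_node_nextc a b N k node sub (v : R -> R) j :
  mesh_ok a b N k node sub -> v b = v a -> (j < N)%nat ->
  v (node (nextc N j)) = v (node (S j)).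
Proof.
  intros (HN & Ha & Hb & _) Hv Hj. unfold nextc.
  destruct (Nat.eq_dec (S j) N) as [E|E].
  - rewrite E, Nat.Div0.mod_same, Ha, Hb. auto.
  - rewrite Nat.mod_small by lia. reflexivity.
Qed.

Lemma Hstar_eq_ipstar_Derive a b N k node sub A beta (omega : nat -> R -> R) v :
  mesh_ok a b N k node sub ->
  (forall i, (i < N)%nat -> Quad k sub A i (Derive (omega i)) = omega i (node (S i)) - omega i (node i)) ->
  (forall x, ex_derive v x) -> (forall x, continuous (Derive v) x) -> v b = v a ->
  Hstar N k node sub A beta (fun _ => v) omega
  = - beta * ipstar N k sub (Derive v) (fun i j => Mstar node sub A (omega i) i j).
Proof.
  intros Hmesh Hquad Dv Cv Hper.
  pose proof Hmesh as (HN & _ & _ & Hcells).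
  unfold ipstar.
  rewrite (sumR_ext N _ (fun i => omega i (node (S i)) * v (node (S i)) - omega i (node i) * v (node i)
                               - Quad k sub A i (fun x => v x * Derive (omega i) x))).
  2:{ intros i Hi. destruct (Hcells i Hi) as (H0 & H1 & _).
      apply Mstar_pairing_Derive; auto. }
  unfold Hstar.
  rewrite (sumR_ext N (fun i => A i O * Derive (omega i) (node i) * jump N node (fun _ => v) (prevc N i))
                      (fun _ => 0 * 0)).
  2:{ intros i Hi. unfold jump. rewrite (value_node_nextc a b N k node sub) by
        (auto; apply Nat.mod_upper_bound; lia). ring. }
  rewrite (sumR_ext N (fun i => v (node (S i)) * jump N node omega i)
            (fun i => (fun j => omega j (node j) * v (node j)) (nextc N i)
                      - omega i (node (S i)) * v (node (S i)))).
  2:{ intros i Hi. unfold jump. rewrite <- (value_node_nextc a b N k node sub v i) by auto. ring. }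
  rewrite sumR_scal, !sumR_minus, (sumR_nextc N (fun j => omega j (node j) * v (node j))) by exact HN.
  ring.
Qed.

Theorem proposition4p16
  (a b : R) (N k : nat) (node : nat -> R) (sub A : nat -> nat -> R)
  (beta : R) (s : nat) (c d : nat -> nat -> R) (tau : R)
  (U : R -> R -> R) (n : nat) :
  a < b ->
  mesh_ok a b N k node sub ->
  AssumptionS N k node sub A ->
  0 < beta ->
  (1 <= s)%nat ->
  (forall l, (l < s)%nat -> sumR (S l) (c l) = 1) ->
  0 < tau ->
  (* U sufficiently smooth in x *)
  (forall t m x, ex_derive (Derive_n (fun y => U y t) m) x) ->
  (* periodic boundary conditions on Omega = [a,b] *)
  (forall x t, U (x + (b - a)) t = U x t) ->
  (* U_t + beta U_x = 0 *)
  (forall x t, is_derive (fun t' => U x t') t (- beta * Derive (fun y => U y t) x)) ->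
  let Un := fun x => U x (INR n * tau) in
  let Un1 := fun x => U x (INR (S n) * tau) in
  forall omega : nat -> R -> R,
  (forall i, (i < N)%nat -> is_poly (omega i) k) ->
  forall l, (l < s)%nat ->
  let Ms := fun i j => Mstar node sub A (omega i) i j in
  let Ur := Uref s c d tau beta Un Un1 in
  ipstar N k sub (Ur (S l)) Ms =
    sumR (S l) (fun kap =>
      c l kap * ipstar N k sub (Ur kap) Ms
      + tau * d l kap * Hstar N k node sub A beta (fun _ => Ur kap) omega)
    + tau * ipstar N k sub (rho s c d tau beta Un Un1 (S l)) Ms.
Proof.
  intros _ Hmesh HS _ _ _ Htau Hsmooth Hper _ Un Un1 omega Hom l Hl Ms Ur.
  assert (Ur_regular : forall kap, smooth (Ur kap) /\ periodic (b - a) (Ur kap)).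
  { apply Uref_smooth_periodic; first [exact (Hsmooth _) | intros x; apply Hper]. }
  pose proof (Uref_succ c d tau beta s Un Un1 l Hl ltac:(lra)) as decomp. fold Ur in decomp.
  rewrite (ipstar_ext N k sub Ms _ _ decomp), ipstar_plus, ipstar_scal, ipstar_rk_step.
  - f_equal. apply sumR_ext. intros kap _. destruct (Ur_regular kap) as [Sk Pk].
    rewrite (Hstar_eq_ipstar_Derive a b N k node sub A beta omega (Ur kap) Hmesh).
    + unfold Ms. ring.
    + intros i Hi. apply (Quad_Derive_poly N); auto.
    + intros. apply smooth_ex_derive, Sk.
    + intros. apply smooth_continuous_Derive, Sk.
    + rewrite <- (Pk a). f_equal. ring.
  - intros kap _ x. split; [apply smooth_continuous | apply smooth_continuous_Derive]; apply Ur_regular.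
  - intros x. apply smooth_continuous, rho_smooth; exact (Hsmooth _).
  - intros x. apply smooth_continuous, smooth_rk_step. intros. apply Ur_regular.
  - intros x. apply smooth_continuous, smooth_scal, rho_smooth; exact (Hsmooth _).
Qed.
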